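(* Let $\chi:\mathcal H\to\mathcal H_L^\chi\otimes\mathcal H_R^\chi$ be a splitting map and let $\{\pi_i\}_{i\in I}$ be the atomic projectors of $\mathcal Z(\mathrm{stloc}_L(\chi))$. Set $\mathcal H_i=\pi_i\mathcal H$ and $\chi_i=\chi\pi_i:\mathcal H\to\mathcal H_L^\chi\otimes\mathcal H_R^\chi$. Then: (1) $\mathcal H=\bigoplus_i\mathcal H_i$; (2) $\chi=\sum_i\chi_i=\sum_i(\chi_i)|_{\mathcal H_i}$; (3) for every $i$, $(\chi_i)|_{\mathcal H_i}$ is a splitting map on $\mathcal H_i$; (4) its algebra of strictly left-local operators, viewed as a subalgebra of $\mathcal L(\mathcal H)$, equals $\pi_i\,\mathrm{stloc}_L(\chi)$, and is thus a factor; (5) there exists a family $\{\mathcal H_L^i\}_{i\in I}$ of pairwise orthogonal subspaces of $\mathcal H_L^\chi$ such that $\mathrm{Im}(\chi_i)\subseteq\mathcal H_L^i\otimes\mathcal H_R^\chi$ for every $i$.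
   Context: All Hilbert spaces are finite-dimensional and complex. A splitting map on $\mathcal H$ is an isometry $\chi:\mathcal H\to\mathcal H_L^\chi\otimes\mathcal H_R^\chi$. $A\in\mathcal L(\mathcal H)$ is strictly left $\chi$-local if there is $\tilde A\in\mathcal L(\mathcal H_L^\chi)$ with $A\chi^\dagger=\chi^\dagger(\tilde A\otimes\mathbb 1)$ and $\chi A=(\tilde A\otimes\mathbb 1)\chi$; $\mathrm{stloc}_L(\chi)$ is the set of these, a Von Neumann algebra (unital $*$-subalgebra of $\mathcal L(\mathcal H)$). For a Von Neumann algebra $\mathcal C$, $\mathcal Z(\mathcal C)=\mathcal C\cap\mathcal C'$ is its centre; a commutative Von Neumann algebra $\mathcal Z$ has a unique family of nonzero, self-adjoint, pairwise orthogonal projectors ($\pi_i\pi_j=\delta_{ij}\pi_i$) spanning $\mathcal Z$, called its atomic projectors (they sum to the identity). A Von Neumann algebra is a factor if its centre consists of scalar multiples of its identity. Operators on $\mathcal H_i$ are viewed as operators on $\mathcal H$ by extending them by $0$ on $\mathcal H_i^\perp$. *)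

From HB Require Import structures.
From mathcomp Require Import all_boot all_order all_algebra.
From mathcomp Require Import reals.
From mathcomp Require Export complex mxtens.
Set Implicit Arguments. Unset Strict Implicit. Unset Printing Implicit Defensive.
Import Order.TTheory GRing.Theory Num.Theory.
Local Open Scope ring_scope.

(* Conventions: a finite-dimensional Hilbert space of dimension n is C^n, vectors are
   column vectors 'cV_n, operators H -> K are matrices 'M_(dim K, dim H) acting by
   left multiplication.  H_L (x) H_R is C^(a*b) via the Kronecker product [*t]
   (mxtens).  Subspaces are encoded by their orthogonal projectors; an operator on a
   subspace (range of P) is viewed as an operator on H extended by 0 on the orthogonal
   complement. *)

Definition adj (C : numClosedFieldType) (m n : nat) (A : 'M[C]_(m, n)) : 'M[C]_(n, m) :=
  \matrix_(i, j) (A j i)^*.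

Definition is_orth_proj (C : numClosedFieldType) (n : nat) (P : 'M[C]_n) : Prop :=
  P *m P = P /\ adj P = P.

(* chi is a splitting map on the subspace H' = range P (P an orthogonal projector on H):
   chi restricted to H' is an isometry H' -> H_L (x) H_R, and chi is extended by 0 on
   the orthogonal complement of H'. *)
Definition splitting_on (C : numClosedFieldType) (n a b : nat)
    (P : 'M[C]_n) (chi : 'M[C]_(a * b, n)) : Prop :=
  is_orth_proj P /\ adj chi *m chi = P /\ chi *m P = chi.

Definition splitting (C : numClosedFieldType) (n a b : nat) (chi : 'M[C]_(a * b, n)) :=
  splitting_on 1%:M chi.

Definition stlocL_on (C : numClosedFieldType) (n a b : nat)
    (P : 'M[C]_n) (chi : 'M[C]_(a * b, n)) (A : 'M[C]_n) : Prop :=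
  P *m A *m P = A /\
  exists At : 'M[C]_a,
    A *m adj chi = adj chi *m (At *t (1%:M : 'M[C]_b)) /\
    chi *m A = (At *t (1%:M : 'M[C]_b)) *m chi.

Definition stlocL (C : numClosedFieldType) (n a b : nat) (chi : 'M[C]_(a * b, n)) :=
  stlocL_on 1%:M chi.

Definition centre (C : numClosedFieldType) (n : nat) (S : 'M[C]_n -> Prop) (Z : 'M[C]_n) : Prop :=
  S Z /\ forall A, S A -> A *m Z = Z *m A.

Definition is_factor (C : numClosedFieldType) (n : nat) (P : 'M[C]_n) (S : 'M[C]_n -> Prop) : Prop :=
  forall Z, centre S Z -> exists c : C, Z = c *: P.

Definition atomic_projectors (C : numClosedFieldType) (n : nat) (I : finType)
    (Zc : 'M[C]_n -> Prop) (pi : I -> 'M[C]_n) : Prop :=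
  [/\ forall i, pi i != 0,
      forall i, adj (pi i) = pi i,
      forall i j, pi i *m pi j = (if i == j then pi i else 0)
    & forall A, Zc A <-> exists c : I -> C, A = \sum_i c i *: pi i].

From HB Require Import structures.
From mathcomp Require Import all_boot all_order all_algebra.
From mathcomp Require Import reals.
From mathcomp Require Import complex mxtens.
(* The atomic projectors pi_i lie in the centre of stlocL(chi), so each is
   itself strictly left local, chi pi_i = (Q_i (x) 1) chi, and commutes with
   every strictly left-local operator.  Compressing by pi_i therefore maps
   stlocL(chi) onto the strictly left-local algebra of chi pi_i, whose centre is
   absorbed by pi_i and lies in Z(stlocL(chi)), hence is C pi_i: a factor.
   For (5), H_L^i is the smallest V with Im(chi pi_i) <= V (x) H_R, spanned by
   the slices of chi pi_i; since Q_j (x) 1 kills chi pi_i (i != j) but fixes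
   chi pi_j, these subspaces are pairwise orthogonal. *)

Set Implicit Arguments.
Unset Strict Implicit.
Unset Printing Implicit Defensive.
Import Order.TTheory GRing.Theory Num.Theory.
Local Open Scope ring_scope.

Section Adjoint.
Variable C : numClosedFieldType.

Lemma adjK m n (A : 'M[C]_(m, n)) : adj (adj A) = A.
Proof. by apply/matrixP => i j; rewrite !mxE conjCK. Qed.

Lemma adjM m n p (A : 'M[C]_(m, n)) (B : 'M[C]_(n, p)) :
  adj (A *m B) = adj B *m adj A.
Proof.
apply/matrixP => i j; rewrite !mxE rmorph_sum; apply: eq_bigr => k _.
by rewrite !mxE rmorphM mulrC.
Qed.

Lemma adj0 m n : adj (0 : 'M[C]_(m, n)) = 0.
Proof. by apply/matrixP => i j; rewrite !mxE conjC0. Qed.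

Lemma adj_tens m n p q (A : 'M[C]_(m, n)) (B : 'M[C]_(p, q)) :
  adj (A *t B) = adj A *t adj B.
Proof. by apply/matrixP => i j; rewrite !mxE rmorphM. Qed.

Lemma adj_tens1 m b (A : 'M[C]_m) : adj (A *t (1%:M : 'M_b)) = adj A *t 1%:M.
Proof.
rewrite adj_tens; congr (_ *t _).
by apply/matrixP => i j; rewrite !mxE rmorph_nat eq_sym.
Qed.

Lemma adjE m n (A : 'M[C]_(m, n)) : adj A = map_mx Num.Def.conjC A^T.
Proof. by apply/matrixP => i j; rewrite !mxE. Qed.

End Adjoint.

Section Tensor.
Variable C : numClosedFieldType.

Lemma tensmx11 a b : (1%:M : 'M[C]_a) *t (1%:M : 'M[C]_b) = 1%:M.
Proof.
apply/matrixP => k l.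
case: (mxtens_indexP k) => i r; case: (mxtens_indexP l) => j s.
rewrite tensmxE !mxE (can_eq (@mxtens_indexK _ _)) xpair_eqE.
by case: (i == j); case: (r == s); rewrite ?mulr1 ?mulr0.
Qed.

Lemma tensmx1_mul a b (X Y : 'M[C]_a) :
  (X *t (1%:M : 'M_b)) *m (Y *t 1%:M) = (X *m Y) *t 1%:M.
Proof. by rewrite tensmx_mul mulmx1. Qed.

(* [slicemx a r] contracts the second tensor factor of C^a (x) C^b with the
   r-th basis vector of C^b. *)
Definition slicemx a {b} (r : 'I_b) : 'M[C]_(a, a * b) :=
  \matrix_(i, k) (k == mxtens_index (i, r))%:R.

Lemma mul_slicemxE a b p (r : 'I_b) (v : 'M[C]_(a * b, p)) i x :
  (slicemx a r *m v) i x = v (mxtens_index (i, r)) x.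
Proof.
rewrite !mxE (bigD1 (mxtens_index (i, r))) //= big1 ?addr0.
  by rewrite !mxE eqxx mul1r.
by move=> k /negbTE nk; rewrite !mxE nk mul0r.
Qed.

Lemma slicemxP a b p (v w : 'M[C]_(a * b, p)) :
  (forall r : 'I_b, slicemx a r *m v = slicemx a r *m w) -> v = w.
Proof.
move=> eq_vw; apply/matrixP => k x; case: (mxtens_indexP k) => i r.
by rewrite -!mul_slicemxE eq_vw.
Qed.

Lemma slicemx_tens1 a b (r : 'I_b) (X : 'M[C]_a) :
  slicemx a r *m (X *t 1%:M) = X *m slicemx a r.
Proof.
apply/matrixP => i k; rewrite mul_slicemxE.
case: (mxtens_indexP k) => j s; rewrite tensmxE !mxE.
rewrite (bigD1 j) //= big1 ?addr0.
  rewrite !mxE (can_eq (@mxtens_indexK _ _)) xpair_eqE eqxx /= eq_sym.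
  by case: (r == s); rewrite ?mulr1 ?mulr0.
move=> l /negbTE nl; rewrite !mxE (can_eq (@mxtens_indexK _ _)) xpair_eqE.
by rewrite eq_sym nl mulr0.
Qed.

Lemma tens1_adj_slicemx a b (r : 'I_b) (X : 'M[C]_a) :
  (X *t 1%:M) *m adj (slicemx a r) = adj (slicemx a r) *m X.
Proof.
have := congr1 (@adj C _ _) (slicemx_tens1 r (adj X)).
by rewrite !adjM adj_tens1 !adjK.
Qed.

End Tensor.

Arguments slicemx {C} a {b} r.

Section SupportProjector.
Variables (C : numClosedFieldType) (n a b : nat).
Implicit Types (w : 'M[C]_(a * b, n)) (Q : 'M[C]_a).

(* The rows of [tens_support w] span the complex conjugate of the smallest V
   with Im w <= V (x) C^b: mxalgebra works with row spaces. *)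
Definition tens_support w : 'M[C]_a :=
  (\sum_(r < b) <<adj (slicemx a r *m w)>>)%MS.

Definition tens_support_basis w := schmidt (row_base (tens_support w)).

Definition support_proj w := adj (tens_support_basis w) *m tens_support_basis w.

Lemma tens_support_basis_unitary w :
  tens_support_basis w *m adj (tens_support_basis w) = 1%:M.
Proof.
rewrite adjE; apply/spectral.unitarymxP.
by apply: schmidt_unitarymx; rewrite rank_leq_col.
Qed.

Lemma tens_support_basisE w : (tens_support_basis w :=: tens_support w)%MS.
Proof.
apply: eqmx_trans (eq_row_base _).
by apply: eqmx_schmidt_free; apply: row_base_free.
Qed.

Lemma support_proj_orth_proj w : is_orth_proj (support_proj w).
Proof.
split; last by rewrite /support_proj adjM adjK.
by rewrite /support_proj mulmxA -(mulmxA _ (tens_support_basis w))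
  tens_support_basis_unitary mulmx1.
Qed.

Lemma support_proj_tens1K w : (support_proj w *t 1%:M) *m w = w.
Proof.
apply: slicemxP => r; rewrite mulmxA slicemx_tens1 -mulmxA.
suff fix_slice :
    adj (slicemx a r *m w) *m support_proj w = adj (slicemx a r *m w).
  have := congr1 (@adj C _ _) fix_slice.
  by rewrite adjM (support_proj_orth_proj w).2 !adjK.
have /submxP [D ->] : (adj (slicemx a r *m w) <= tens_support_basis w)%MS.
  by rewrite tens_support_basisE; apply: (sumsmx_sup r); rewrite ?genmxE.
by rewrite /support_proj mulmxA -(mulmxA D) tens_support_basis_unitary mulmx1.
Qed.

(* Q commutes with slicing, so every slice of w2 is orthogonal to every slice
   of w1. *)
Lemma support_proj_orth w1 w2 Q :
  (Q *t 1%:M) *m w1 = 0 -> adj w2 *m (Q *t 1%:M) = adj w2 ->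
  support_proj w1 *m support_proj w2 = 0.
Proof.
move=> Qw1 w2Q.
have slices_orth r s : adj (slicemx a s *m w2) *m (slicemx a r *m w1) = 0.
  rewrite adjM -w2Q -!mulmxA (mulmxA (Q *t 1%:M)) tens1_adj_slicemx.
  by rewrite -!mulmxA (mulmxA Q) -slicemx_tens1 -mulmxA Qw1 !mulmx0.
suff basis_orth : tens_support_basis w1 *m adj (tens_support_basis w2) = 0.
  rewrite /support_proj mulmxA -(mulmxA _ (tens_support_basis w1)).
  by rewrite basis_orth mulmx0 mul0mx.
apply/eqP; rewrite -sub_kermx tens_support_basisE; apply/sumsmx_subP => r _.
rewrite genmxE sub_kermx -adjM.
suff -> : tens_support_basis w2 *m (slicemx a r *m w1) = 0 by rewrite adj0.
apply/eqP; rewrite -sub_kermx tens_support_basisE; apply/sumsmx_subP => s _.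
by rewrite genmxE sub_kermx slices_orth.
Qed.

End SupportProjector.

Section AtomicProjectors.
Variables (C : numClosedFieldType) (n : nat) (I : finType).
Variables (Zc : 'M[C]_n -> Prop) (pi : I -> 'M[C]_n).
Hypothesis pi_atomic : atomic_projectors Zc pi.

Lemma atomic_proj_idem i : pi i *m pi i = pi i.
Proof. by have [_ _ pi_mul _] := pi_atomic; rewrite pi_mul eqxx. Qed.

Lemma atomic_proj_orth i j : i != j -> pi i *m pi j = 0.
Proof. by have [_ _ pi_mul _] := pi_atomic; rewrite pi_mul => /negbTE->. Qed.

Lemma atomic_proj_orth_proj i : is_orth_proj (pi i).
Proof. by split; [apply: atomic_proj_idem | case: pi_atomic]. Qed.

Lemma atomic_proj_in i : Zc (pi i).
Proof.
have [_ _ _ ->] := pi_atomic; exists (fun j => (j == i)%:R).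
rewrite (bigD1 i) //= big1 ?addr0 ?eqxx ?scale1r // => j /negbTE->.
by rewrite scale0r.
Qed.

Lemma mul_atomic_proj_sum (c : I -> C) i :
  pi i *m (\sum_j c j *: pi j) = c i *: pi i.
Proof.
rewrite mulmx_sumr (bigD1 i) //= big1 ?addr0 => [|j ji].
  by rewrite -scalemxAr atomic_proj_idem.
by rewrite -scalemxAr atomic_proj_orth ?scaler0 // eq_sym.
Qed.

Lemma atomic_proj_compress Z i : Zc Z -> exists c : C, pi i *m Z = c *: pi i.
Proof.
have [_ _ _ ->] := pi_atomic; case=> c ->.
by exists (c i); apply: mul_atomic_proj_sum.
Qed.

Lemma sum_atomic_proj : Zc 1%:M -> \sum_i pi i = 1%:M.
Proof.
have [pi_neq0 _ _ ->] := pi_atomic; case=> c c1.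
suff c_eq1 i : c i = 1.
  by rewrite c1; apply: eq_bigr => i _; rewrite c_eq1 scale1r.
have /eqP := mul_atomic_proj_sum c i; rewrite -c1 mulmx1 -subr_eq0.
rewrite -{1}[pi i]scale1r -scalerBl scaler_eq0 (negbTE (pi_neq0 i)) orbF.
by rewrite subr_eq0 => /eqP.
Qed.

End AtomicProjectors.

Section CentralProjector.
Variables (C : numClosedFieldType) (n a b : nat).
Variables (chi : 'M[C]_(a * b, n)) (p : 'M[C]_n).
Hypotheses (p_proj : is_orth_proj p) (p_central : centre (stlocL chi) p).

Let p_idem : p *m p = p. Proof. by case: p_proj. Qed.
Let adj_chi_p : adj (chi *m p) = p *m adj chi.
Proof. by rewrite adjM p_proj.2. Qed.

Lemma splitting_on_compress : splitting chi -> splitting_on p (chi *m p).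
Proof.
case=> _ [chi_iso _]; split=> //; split; last by rewrite -mulmxA p_idem.
by rewrite adj_chi_p mulmxA -(mulmxA p) chi_iso mulmx1 p_idem.
Qed.

Lemma stlocL_on_compress A :
  stlocL_on p (chi *m p) A -> stlocL chi A /\ p *m A = A.
Proof.
case=> pAp [At [A_adj A_chi]]; have [_ [Q [pQ Qp]]] := p_central.1.
have pA : p *m A = A by rewrite -pAp !mulmxA p_idem.
have Ap : A *m p = A by rewrite -pAp -mulmxA p_idem.
split=> //; split; first by rewrite mulmx1 mul1mx.
exists (Q *m At *m Q); rewrite -!tensmx1_mul; split.
- rewrite !mulmxA -pQ -adj_chi_p -A_adj adj_chi_p.
  by rewrite -!mulmxA -pQ (mulmxA p) p_idem mulmxA Ap.
- by rewrite -!mulmxA -Qp -A_chi !mulmxA -Qp -(mulmxA chi) p_idem -mulmxA pA.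
Qed.

Lemma stlocL_compress B : stlocL chi B -> stlocL_on p (chi *m p) (p *m B).
Proof.
move=> B_loc; have Bp := p_central.2 B B_loc.
have [_ [Bt [B_adj B_chi]]] := B_loc.
split; first by rewrite -!mulmxA Bp !mulmxA !p_idem.
exists Bt; split.
- rewrite adj_chi_p !mulmxA -(mulmxA p B p) Bp mulmxA p_idem.
  by rewrite -mulmxA B_adj mulmxA.
- by rewrite -!mulmxA (mulmxA p) p_idem -Bp mulmxA B_chi -mulmxA.
Qed.

Lemma stlocL_on_centralE A :
  stlocL_on p (chi *m p) A <-> exists B, stlocL chi B /\ A = p *m B.
Proof.
split=> [A_loc | [B [B_loc ->]]]; last exact: stlocL_compress.
by have [A_glob pA] := stlocL_on_compress A_loc; exists A.
Qed.

(* Z is absorbed by p and p is central, so commuting with every p B amounts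
   to commuting with every B. *)
Lemma centre_stlocL_on_compress Z :
  centre (stlocL_on p (chi *m p)) Z -> centre (stlocL chi) Z /\ p *m Z = Z.
Proof.
case=> Z_loc Z_comm; have [Z_glob pZ] := stlocL_on_compress Z_loc.
have Zp : Z *m p = Z by case: Z_loc => pZp _; rewrite -pZp -mulmxA p_idem.
split=> //; split=> // B B_loc.
rewrite -{1}pZ mulmxA (p_central.2 B B_loc).
by rewrite (Z_comm _ (stlocL_compress B_loc)) mulmxA Zp.
Qed.

Lemma support_proj_central_orth (q : 'M[C]_n) :
  p *m q = 0 -> support_proj (chi *m q) *m support_proj (chi *m p) = 0.
Proof.
move=> pq; have [_ [Q [pQ Qp]]] := p_central.1.
apply: (support_proj_orth (Q := Q)).
  by rewrite mulmxA -Qp -mulmxA pq mulmx0.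
by rewrite adj_chi_p -mulmxA -pQ mulmxA p_idem.
Qed.

End CentralProjector.

Lemma centre_stlocL1 (C : numClosedFieldType) n a b (chi : 'M[C]_(a * b, n)) :
  centre (stlocL chi) 1%:M.
Proof.
split=> [|A _]; last by rewrite mul1mx mulmx1.
by split; [rewrite !mul1mx | exists 1%:M; rewrite tensmx11 !mul1mx !mulmx1].
Qed.

Lemma stlocL_on_atomic_factor (C : numClosedFieldType) n a b
    (chi : 'M[C]_(a * b, n)) (I : finType) (pi : I -> 'M[C]_n) i :
  atomic_projectors (centre (stlocL chi)) pi ->
  is_factor (pi i) (stlocL_on (pi i) (chi *m pi i)).
Proof.
move=> pi_atomic Z Z_centre.
have [Z_central <-] := centre_stlocL_on_compress
  (atomic_proj_orth_proj pi_atomic i) (atomic_proj_in pi_atomic i) Z_centre.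
exact: atomic_proj_compress pi_atomic _ _ Z_central.
Qed.

Theorem mainTheorem12 (R : realType) (n a b : nat) (chi : 'M[R[i]]_(a * b, n))
    (I : finType) (pi : I -> 'M[R[i]]_n) :
  splitting chi ->
  atomic_projectors (centre (stlocL chi)) pi ->
  let chi_ := fun i => chi *m pi i in
  [/\ \sum_i pi i = 1%:M,
      chi = \sum_i chi_ i /\ chi = \sum_i chi_ i *m pi i,
      forall i, splitting_on (pi i) (chi_ i *m pi i),
      forall i,
        (forall A, stlocL_on (pi i) (chi_ i *m pi i) A <->
                   exists B, stlocL chi B /\ A = pi i *m B) /\
        is_factor (pi i) (stlocL_on (pi i) (chi_ i *m pi i))
    & exists QL : I -> 'M[R[i]]_a,
        [/\ forall i, is_orth_proj (QL i),
            forall i j, i != j -> QL i *m QL j = 0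
          & forall i, (QL i *t (1%:M : 'M[R[i]]_b)) *m chi_ i = chi_ i]].
Proof.
move=> chi_split pi_atomic chi_; rewrite {}/chi_.
have pi_proj := atomic_proj_orth_proj pi_atomic.
have pi_central := atomic_proj_in pi_atomic.
have sum_pi := sum_atomic_proj pi_atomic (centre_stlocL1 chi).
have chi_pi_idem i : chi *m pi i *m pi i = chi *m pi i.
  by rewrite -mulmxA (atomic_proj_idem pi_atomic).
have chi_sum : chi = \sum_i chi *m pi i by rewrite -mulmx_sumr sum_pi mulmx1.
split=> [||i|i|] //.
- by split; last under eq_bigr do rewrite chi_pi_idem.
- by rewrite chi_pi_idem; apply: splitting_on_compress.
- rewrite chi_pi_idem; split; first exact: stlocL_on_centralE.
  exact: stlocL_on_atomic_factor.
exists (fun i => support_proj (chi *m pi i)); split=> [i|i j ij|i].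
- exact: support_proj_orth_proj.
- rewrite support_proj_central_orth //.
  by rewrite (atomic_proj_orth pi_atomic) // eq_sym.
- exact: support_proj_tens1K.
Qed.
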